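(* Let $k$ be a field and let $V_\bullet$ be a complex of finite dimensional $k$-vector spaces, indexed cohomologically (differential $d_i:V_i\to V_{i+1}$, $i\in\mathbb{Z}$). Call a finite interval $S=[M,N]\subset\mathbb{Z}$ a stretch if it is maximal (among finite intervals) with respect to the property that $d_i\neq 0$ whenever $i,i+1\in S$. Let $\{T_i\}_{i\in\mathbb{Z}}$ be scalars in $k$ such that $\sum_{i\in S}(-1)^iT_i=0$ for every stretch $S$ of $V_\bullet$. Then there exists a null-homotopic chain map $\tau_\bullet:V_\bullet\to V_\bullet$ such that $\operatorname{tr}(\tau_i)=T_i$ for every $i\in\mathbb{Z}$.
   Context: $\operatorname{tr}$ denotes the trace of an endomorphism of a finite dimensional vector space. A chain map is null-homotopic if it is chain homotopic to the zero map. *)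

From HB Require Import structures.
From mathcomp Require Import all_boot all_order all_algebra.
Set Implicit Arguments. Unset Strict Implicit. Unset Printing Implicit Defensive.
Import Order.TTheory GRing.Theory Num.Theory.
Local Open Scope ring_scope.

(* A cohomologically indexed complex of finite-dimensional k-vector spaces:
   V_i = k^(V i) (row vectors), differential d i : V_i -> V_(i+1) given by a
   matrix acting on the right (row-vector convention), so d_(i+1) o d_i = 0
   reads  d i *m d (i+1) = 0. *)

Definition nonzero_on (k : fieldType) (V : int -> nat)
  (d : forall i : int, 'M[k]_(V i, V (i + 1))) (M N : int) : Prop :=
  forall i : int, M <= i -> i + 1 <= N -> d i != 0.

Definition is_stretch (k : fieldType) (V : int -> nat)
  (d : forall i : int, 'M[k]_(V i, V (i + 1))) (M N : int) : Prop :=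
  [/\ M <= N, nonzero_on d M N &
      forall M' N' : int, M' <= M -> N <= N' -> M' <= N' ->
        nonzero_on d M' N' -> M' = M /\ N' = N].

Definition alt_sum (k : fieldType) (T : int -> k) (M N : int) : k :=
  \sum_(j < `|N - M|%N.+1) (-1) ^ (M + j%:Z) * T (M + j%:Z).

From HB Require Import structures.
From mathcomp Require Import all_boot all_order all_algebra zify.
From Stdlib Require Import Classical.
Import Order.TTheory GRing.Theory Num.Theory.
Set Implicit Arguments. Unset Strict Implicit. Unset Printing Implicit Defensive.
Local Open Scope ring_scope.

(* Any family h_i : V_(i+1) -> V_i defines the null-homotopic chain map
   tau_(i+1) = d_(i+1) h_(i+1) + h_i d_i, and tr tau_(i+1) = t_(i+1) + t_i with
   t_i = tr (h_i d_i).  Every scalar t_i is of that form, except that t_i must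
   vanish when d_i = 0.  So it suffices to solve t_i + t_(i+1) = T_(i+1) with t
   vanishing on the zeros of d.  If F is a primitive of (-1)^i T_i, then
   t_i = (-1)^i (F_i - c) solves the recurrence, and it vanishes at the zeros
   of d as soon as F is constant on them: for consecutive zeros q < i of d the
   interval [q+1, i] is a stretch, so F_i - F_q = sum_(j in [q+1, i]) (-1)^j T_j
   = 0. *)

Section TracePreimage.
Variables (k : fieldType) (m n : nat).

Lemma mxtrace_delta_mul (i : 'I_n) (j : 'I_m) (A : 'M[k]_(m, n)) :
  \tr (delta_mx i j *m A) = A j i.
Proof.
rewrite /mxtrace (bigD1 i) //= big1 ?addr0 => [|i' /negbTE ni'i].
  rewrite mxE (bigD1 j) //= big1 ?addr0 => [|j' /negbTE nj'j].
    by rewrite mxE !eqxx mul1r.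
  by rewrite mxE nj'j andbF mul0r.
by rewrite mxE big1 // => j' _; rewrite mxE ni'i mul0r.
Qed.

Definition trace_preimage (A : 'M[k]_(m, n)) (c : k) : 'M[k]_(n, m) :=
  if [pick ij | A ij.1 ij.2 != 0] is Some (i, j)
  then (c / A i j) *: delta_mx j i else 0.

Lemma mxtrace_trace_preimage A c :
  (A = 0 -> c = 0) -> \tr (trace_preimage A c *m A) = c.
Proof.
rewrite /trace_preimage; case: pickP => [[i j] /= Aij _ | A0 c0].
  by rewrite -scalemxAl mxtraceZ mxtrace_delta_mul mulfVK.
rewrite mul0mx mxtrace0 c0 //; apply/matrixP => i j.
by rewrite mxE; apply/eqP/negbFE/(A0 (i, j)).
Qed.

End TracePreimage.

Section IntPrimitive.
Variable V : zmodType.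

Definition int_primitive (a : int -> V) (i : int) : V :=
  match i with
  | Posz n => \sum_(j < n) a j.+1%:Z
  | Negz n => - \sum_(j < n.+1) a (- j%:Z)
  end.

Lemma int_primitiveS a i :
  int_primitive a (i + 1) = int_primitive a i + a (i + 1).
Proof.
case: i => [n|[|n]].
- by rewrite -PoszD addn1 /= big_ord_recr.
- by rewrite (_ : Negz 0 + 1 = 0) //= big_ord0 big_ord1 addNr.
- rewrite (_ : Negz n.+1 + 1 = Negz n); last by rewrite !NegzE; lia.
  by rewrite /= [in RHS]big_ord_recr /= opprD addrNK.
Qed.

End IntPrimitive.

Lemma eq_on_consecutive (X : Type) (P : pred int) (F : int -> X) :
  (forall q i, q < i -> P q -> P i -> (forall j, q < j < i -> ~~ P j) ->
     F q = F i) ->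
  forall q i, P q -> P i -> F q = F i.
Proof.
move=> Fcons.
suff Fup n q : P q -> P (q + n%:Z) -> F q = F (q + n%:Z).
  move=> q i Pq Pi; have [qi|/ltW iq] := lerP q i.
    have Ei : i = q + `|i - q|%N%:Z by lia.
    by rewrite Ei in Pi *; apply: Fup.
  have Eq : q = i + `|q - i|%N%:Z by lia.
  by rewrite Eq in Pq *; symmetry; apply: Fup.
elim/ltn_ind: n q => n IH q Pq Pqn.
have [j /andP[j_gt0 Pqj]|none] :=
  pickP (fun j : 'I_n => (0 < j)%N && P (q + j%:Z)).
  have Eqn : q + n%:Z = q + j%:Z + (n - j)%N%:Z.
    by rewrite -addrA -PoszD subnKC // ltnW.
  rewrite (IH j) // Eqn; apply: IH => //; first by have := ltn_ord j; lia.
  by rewrite -Eqn.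
case: n IH Pqn none => [|n] IH Pqn none; first by rewrite addr0.
apply: Fcons => //; first lia.
move=> j /andP[qj jn]; have jq_lt : (`|j - q| < n.+1)%N by lia.
have := none (Ordinal jq_lt); rewrite /= (_ : q + _ = j); last by lia.
by move/negbT; rewrite negb_and; case/orP => //; lia.
Qed.

Section AlternatingPrimitive.
Variables (k : fieldType) (T : int -> k).

Lemma signrzS (i : int) : (-1) ^ (i + 1) = - (-1) ^ i :> k.
Proof. by rewrite expfzDr ?oppr_eq0 ?oner_eq0 // expr1z mulrN1. Qed.

Lemma signrz_mul_self (i : int) : (-1) ^ i * (-1) ^ i = 1 :> k.
Proof. by rewrite -expfzMl mulrNN mulr1 exp1rz. Qed.

Definition alt_primitive : int -> k := int_primitive (fun j => (-1) ^ j * T j).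

Lemma alt_primitiveS i :
  alt_primitive (i + 1) = alt_primitive i + (-1) ^ (i + 1) * T (i + 1).
Proof. exact: int_primitiveS. Qed.

Lemma alt_sum_primitive M N :
  M <= N -> alt_sum T M N = alt_primitive N - alt_primitive (M - 1).
Proof.
pose a (j : nat) := (-1) ^ (M + j%:Z) * T (M + j%:Z).
move=> MN; rewrite /alt_sum -(big_mkord xpredT a).
rewrite (@telescope_sumr_eq _ _ _ (fun j => alt_primitive (M - 1 + j%:Z))) //.
  by rewrite addr0 (_ : M - 1 + _ = N) //; lia.
move=> j _ /=; rewrite (_ : M - 1 + j.+1%:Z = M - 1 + j%:Z + 1); last by lia.
rewrite alt_primitiveS addrAC subrr add0r.
by rewrite (_ : M - 1 + j%:Z + 1 = M + j%:Z) //; lia.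
Qed.

Lemma alt_solution (P : pred int) :
  (forall q i, q < i -> P q -> P i -> (forall j, q < j < i -> ~~ P j) ->
     alt_sum T (q + 1) i = 0) ->
  exists t : int -> k,
    (forall i, P i -> t i = 0) /\ (forall i, t i + t (i + 1) = T (i + 1)).
Proof.
move=> gap_sum0.
have Fconst : forall q i, P q -> P i -> alt_primitive q = alt_primitive i.
  apply: eq_on_consecutive => q i qi Pq Pi gap.
  have := gap_sum0 q i qi Pq Pi gap.
  rewrite alt_sum_primitive ?addrK; last by lia.
  by move/eqP; rewrite subr_eq0 => /eqP ->.
have [c Fc] : exists c, forall i, P i -> alt_primitive i = c.
  have [[z Pz]|noP] := classic (exists z, P z).
    by exists (alt_primitive z) => i Pi; apply: Fconst.
  by exists 0 => i Pi; case: noP; exists i.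
exists (fun i => (-1) ^ i * (alt_primitive i - c)).
split=> [i /Fc ->|i]; first by rewrite subrr mulr0.
rewrite alt_primitiveS signrzS addrAC !mulNr -mulrBr opprB subrKC.
by rewrite mulrA signrz_mul_self mul1r.
Qed.

End AlternatingPrimitive.

Section Complex.
Variables (k : fieldType) (V : int -> nat).
Variable d : forall i : int, 'M[k]_(V i, V (i + 1)).

Lemma consecutive_zeros_stretch q i :
  q < i -> d q = 0 -> d i = 0 -> (forall j, q < j < i -> d j != 0) ->
  is_stretch d (q + 1) i.
Proof.
move=> qi dq0 di0 gap; split=> [||M N MS SN MN nzMN]; first by lia.
  by move=> j qj ji; apply: gap; lia.
have [SM|] := ltP M (q + 1).
  by have := nzMN q; rewrite dq0 eqxx => /(_ _ _)/negP; lia.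
have [NS|] := ltP i N.
  by have := nzMN i; rewrite di0 eqxx => /(_ _ _)/negP; lia.
by split; lia.
Qed.

Definition nullhomotopic_map (h : forall i : int, 'M[k]_(V (i + 1), V i))
  (i : int) : 'M[k]_(V i) :=
  let e := congr1 V (subrK 1 i) in
  d i *m h i + castmx (e, e) (h (i - 1) *m d (i - 1)).

Lemma castmx_family (W : int -> nat) (F : forall j : int, 'M[k]_(W j)) j j'
  (e : j = j') (E : W j = W j') : castmx (E, E) (F j) = F j'.
Proof. by case: j' / e E => E; rewrite (eq_irrelevance E erefl) castmx_id. Qed.

Lemma nullhomotopic_mapS h i :
  nullhomotopic_map h (i + 1) = d (i + 1) *m h (i + 1) + h i *m d i.
Proof.
congr (_ + _).
exact: (castmx_family (fun j => h j *m d j) (addrK 1 i)).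
Qed.

Hypothesis dd0 : forall i : int, d i *m d (i + 1) = 0.

Lemma nullhomotopic_map_chain h i :
  nullhomotopic_map h i *m d i = d i *m nullhomotopic_map h (i + 1).
Proof.
rewrite -[i](subrK 1); move: (i - 1) => j.
rewrite !nullhomotopic_mapS mulmxDl mulmxDr -!mulmxA dd0 mulmx0 addr0.
by rewrite !mulmxA dd0 mul0mx add0r.
Qed.

End Complex.

Theorem lemmaB (k : fieldType) (V : int -> nat)
  (d : forall i : int, 'M[k]_(V i, V (i + 1)))
  (Hd : forall i : int, d i *m d (i + 1) = 0)
  (T : int -> k)
  (HT : forall M N : int, is_stretch d M N -> alt_sum T M N = 0) :
  exists tau : forall i : int, 'M[k]_(V i),
    [/\ (* chain map *)
        forall i : int, tau i *m d i = d i *m tau (i + 1),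
        (* null-homotopic: h_i : V_(i+1) -> V_i with
           tau_(i+1) = h_(i+1) o d_(i+1) + d_i o h_i *)
        exists h : forall i : int, 'M[k]_(V (i + 1), V i),
          forall i : int, tau (i + 1) = d (i + 1) *m h (i + 1) + h i *m d i
      & forall i : int, \tr (tau i) = T i].
Proof.
have [t [t0 tS]] : exists t : int -> k,
    (forall i, d i == 0 -> t i = 0) /\ (forall i, t i + t (i + 1) = T (i + 1)).
  apply: alt_solution => q i qi /eqP dq0 /eqP di0 gap.
  exact/HT/consecutive_zeros_stretch.
pose h i := trace_preimage (d i) (t i).
have trh i : \tr (h i *m d i) = t i by apply: mxtrace_trace_preimage => /eqP/t0.
exists (nullhomotopic_map d h); split.
- exact: nullhomotopic_map_chain.
- by exists h; apply: nullhomotopic_mapS.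
- move=> i; rewrite -[i](subrK 1) nullhomotopic_mapS mxtraceD mxtrace_mulC !trh.
  by rewrite addrC tS.
Qed.
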